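(* The VC-dimension of the edge relation on the Hamming graph $H(d,q)$ equals $3$ if and only if at least one of the following holds: (1) $d\ge 3$ and $q\ge 3$; (2) $d\ge 2$ and $q\ge 4$; (3) $d\ge 4$ and $q\ge 2$.
   Context: For $d,q\in\mathbb N$ and a set $S$ with $|S|=q$, the Hamming graph $H(d,q)$ has vertex set $S^d$, two vertices adjacent iff they agree in all but exactly one coordinate. The VC-dimension of the edge relation on a graph $G$ is the largest size of a set $A\subseteq V(G)$ such that $\{A\cap N(v)\mid v\in V(G)\}$ equals the power set of $A$, where $N(v)$ is the set of vertices adjacent to $v$. *)

From mathcomp Require Import all_boot.
Set Implicit Arguments. Unset Strict Implicit. Unset Printing Implicit Defensive.

Definition hamming_vertex (d q : nat) := {ffun 'I_d -> 'I_q}.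

Definition hamming_adj (d q : nat) (x y : hamming_vertex d q) : bool :=
  #|[set i | x i != y i]| == 1.

Definition nbhd (T : finType) (e : rel T) (v : T) : {set T} := [set u | e v u].

Definition shattered (T : finType) (e : rel T) (A : {set T}) : bool :=
  [set A :&: nbhd e v | v : T] == powerset A.

(* VC-dimension of the edge relation: largest size of a shattered set
   (0 if no set is shattered, which only happens on the empty graph). *)
Definition vc_dim (T : finType) (e : rel T) : nat :=
  \max_(A : {set T} | shattered e A) #|A|.

Definition hamming_vc_dim (d q : nat) : nat :=
  vc_dim (@hamming_adj d q).

(* Every point of a shattered set A is a neighbour of a common vertex v, so it
   differs from v in exactly one coordinate, its direction.  If a second common
   neighbour w of three points of A exists, the three share a direction: otherwise
   w would be the fourth corner of the square spanned by two of them and could not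
   reach the third.  A vertex adjacent to two points of such a line but not to a
   third one must be that third point, so four points cannot be shattered.
   For three shattered points, two of them in a common direction give four distinct
   values on one line (q >= 4); otherwise the directions are distinct (d >= 3) and a
   neighbour of one point only either moves a fourth coordinate (d >= 4) or takes a
   third value in some coordinate (q >= 3).  Conversely three points on a line
   (d >= 2, q >= 4), the unit vectors (d >= 3, q >= 3) and 1001, 0101, 0011
   (d >= 4, q >= 2) are shattered, with explicit witnesses. *)

From mathcomp Require Import all_boot.
Set Implicit Arguments. Unset Strict Implicit. Unset Printing Implicit Defensive.

Lemma size_uniq_ord n (s : seq 'I_n) : uniq s -> size s <= n.
Proof. by move=> /card_uniqP <-; rewrite -[n in _ <= n]card_ord max_card. Qed.

Lemma card_ord_count d (P : pred nat) : #|[set i : 'I_d | P i]| = count P (iota 0 d).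
Proof. by rewrite -val_enum_ord count_map cardsE cardE /enum_mem size_filter filter_predT. Qed.

Lemma uniq_seq_of_card (T : finType) (A : {set T}) n :
  n <= #|A| -> exists s, [/\ uniq s, size s = n & {subset s <= A}].
Proof.
move=> le_n_A; exists (take n (enum A)); split.
- exact/take_uniq/enum_uniq.
- by rewrite size_takel // -cardE.
- by move=> x /mem_take; rewrite mem_enum.
Qed.

Lemma map_nth_index (T : eqType) (U : Type) (u0 : U) (s : seq T) (us : seq U) :
  uniq s -> size us = size s -> map (fun x => nth u0 us (index x s)) s = us.
Proof.
elim: s us => [|x s IHs] [|u us] //= /andP[xNs s_uniq] [size_us].
rewrite eqxx -[us in RHS](IHs us) //; congr (_ :: _); apply/eq_in_map => y ys.
by rewrite eq_sym (negbTE (memPn xNs y ys)).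
Qed.

Section Shattering.
Variables (T : finType) (e : rel T).

Lemma shatteredP (A : {set T}) :
  reflect (forall P : pred T, exists w, {in A, forall x, e w x = P x}) (shattered e A).
Proof.
apply: (iffP eqP) => [shA P | W].
  have : [set x in A | P x] \in powerset A.
    by rewrite powersetE; apply/subsetP => x; rewrite inE => /andP[].
  rewrite -shA => /imsetP[w _ Aw]; exists w => x xA.
  by move/setP/(_ x): Aw; rewrite !inE xA.
apply/setP => B; apply/imsetP/idP => [[w _ ->] | ].
  by rewrite powersetE subsetIl.
rewrite powersetE => sBA; have [w Bw] := W (mem B); exists w => //.
apply/setP => x; rewrite !inE; case xA: (x \in A); first by rewrite Bw.
by apply/negbTE; apply: contraFN xA; apply: (subsetP sBA).
Qed.

Lemma shattered_patterns (A : {set T}) (s : seq T) :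
  shattered e A -> uniq s -> {subset s <= A} ->
  forall bs : seq bool, size bs = size s -> exists w, map (e w) s = bs.
Proof.
move=> /shatteredP W s_uniq sA bs size_bs.
have [w Aw] := W (fun x => nth false bs (index x s)); exists w.
rewrite -[RHS](map_nth_index false s_uniq size_bs); apply/eq_in_map => x /sA.
exact: Aw.
Qed.

Lemma shattered_of_patterns (s : seq T) :
  uniq s -> (forall bs : seq bool, size bs = size s -> exists w, map (e w) s = bs) ->
  exists2 A : {set T}, shattered e A & #|A| = size s.
Proof.
move=> s_uniq W; exists [set x in s]; last by rewrite cardsE; apply/card_uniqP.
apply/shatteredP => P; have [w /eq_in_map Pw] := W (map P s) (size_map P s).
by exists w => x; rewrite inE => /Pw.
Qed.

Lemma vc_dim_ge (A : {set T}) : shattered e A -> #|A| <= vc_dim e.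
Proof. exact: leq_bigmax_cond. Qed.

Lemma vc_dim_le n : (forall A : {set T}, shattered e A -> #|A| <= n) -> vc_dim e <= n.
Proof. by move=> le_n; apply/bigmax_leqP. Qed.

Lemma vc_dim_witness : 0 < vc_dim e -> exists2 A : {set T}, shattered e A & #|A| = vc_dim e.
Proof.
rewrite /vc_dim; case: (pickP (shattered e)) => [A0 shA0 _ | none].
  by rewrite (bigmax_eq_arg A0) //; case: arg_maxnP => // A shA _; exists A.
by rewrite big_pred0.
Qed.

End Shattering.

Section Hamming.
Variables d q : nat.
Local Notation V := (hamming_vertex d q).
Local Notation adj := (@hamming_adj d q).
Implicit Types (a b c v w x y : V) (i j k : 'I_d).

Definition agree_off x y i := forall k, k != i -> x k = y k.

Definition adj_at x y i := x i != y i /\ agree_off x y i.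

Lemma agree_off_sym x y i : agree_off x y i -> agree_off y x i.
Proof. by move=> xy k /xy. Qed.

Lemma agree_off_trans y x z i : agree_off x y i -> agree_off y z i -> agree_off x z i.
Proof. by move=> xy yz k ki; rewrite xy // yz. Qed.

Lemma agree_off_eq x y i : agree_off x y i -> x i = y i -> x = y.
Proof. by move=> xy xyi; apply/ffunP => k; case: (eqVneq k i) => [-> | /xy]. Qed.

Lemma adj_at_agree_off v x y i : adj_at v x i -> adj_at v y i -> agree_off x y i.
Proof. by move=> [_ vx] [_ vy]; apply: agree_off_trans (agree_off_sym vx) vy. Qed.

Lemma adj_at_neq x y i : adj_at x y i -> x != y.
Proof. by move=> [xyi _]; apply: contraNneq xyi => ->. Qed.

Lemma card_diff_eq0 x y : (#|[set i | x i != y i]| == 0) = (x == y).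
Proof.
rewrite cards_eq0; apply/eqP/eqP => [xy | -> ]; last by apply/setP => i; rewrite !inE eqxx.
by apply/ffunP => i; apply/eqP; move/setP/(_ i): xy; rewrite !inE => /negbFE.
Qed.

Lemma adjP x y : reflect (exists i, adj_at x y i) (adj x y).
Proof.
apply: (iffP cards1P) => [[i xyi] | [i [xyi xy]]].
  exists i; split; first by move/setP/(_ i): xyi; rewrite !inE eqxx.
  by move=> k ki; apply/eqP; move/setP/(_ k): xyi; rewrite !inE (negbTE ki) => /negbFE.
exists i; apply/setP => k; rewrite !inE.
by case: (eqVneq k i) => [-> | /xy ->]; rewrite ?xyi ?eqxx.
Qed.

Lemma adj_neq x y : adj x y -> x != y.
Proof. by case/adjP => i /adj_at_neq. Qed.

Lemma adj_at_of_neq x y i : adj x y -> x i != y i -> adj_at x y i.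
Proof.
case/adjP => k [xyk xy] xyi; suff -> : i = k by [].
by apply/eqP; apply: contraNT xyi => /xy ->.
Qed.

Lemma adj_dim_le1 x y : d <= 1 -> x != y -> adj x y.
Proof.
move=> d1 xy; rewrite /hamming_adj eqn_leq lt0n card_diff_eq0 xy andbT.
by rewrite (leq_trans (max_card _)) ?card_ord.
Qed.

Lemma common_nonnbr_dim_gt1 a b w : a != b -> ~~ adj w a -> ~~ adj w b -> 1 < d.
Proof.
move=> ab wa wb; rewrite ltnNge; apply/negP => d1.
case: (eqVneq w a) => [wa_eq | /(adj_dim_le1 d1)]; last by apply/negP.
by move: wb; rewrite wa_eq adj_dim_le1.
Qed.

Lemma line_size (s : seq V) c i :
  uniq s -> {in s, forall x, agree_off x c i} -> size s <= q.
Proof.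
move=> s_uniq sc; rewrite -(size_map (fun x => x i)); apply/size_uniq_ord.
rewrite map_inj_in_uniq // => x y xs ys xyi.
exact: agree_off_eq (agree_off_trans (sc x xs) (agree_off_sym (sc y ys))) xyi.
Qed.

Lemma common_nbr_agree_off a b w i :
  a != b -> agree_off a b i -> adj w a -> adj w b -> agree_off w a i.
Proof.
move=> ab abi wa wb k ki; apply/eqP; apply: contraT => wak.
have [_ wa_k] := adj_at_of_neq wa wak.
have wbk : w k != b k by rewrite -(abi k ki).
have [_ wb_k] := adj_at_of_neq wb wbk.
case/negP: ab; apply/eqP/(agree_off_eq abi).
by rewrite -wa_k ?wb_k // eq_sym.
Qed.

Lemma common_nbr_corner v a b w i j : i != j ->
  adj_at v a i -> adj_at v b j -> w != v -> adj w a -> adj w b -> w j = b j.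
Proof.
move=> ij [vai va] [vbj vb] wv wa wb; apply/eqP; apply: contraT => wbj.
have [_ wb'] := adj_at_of_neq wb wbj.
have wvi : w i = v i by rewrite wb' // vb.
have wai : w i != a i by rewrite wvi.
have [_ wa'] := adj_at_of_neq wa wai.
case/negP: wv; apply/eqP/(agree_off_eq _ wvi).
exact: agree_off_trans wa' (agree_off_sym va).
Qed.

Lemma common_nbrs_same_dir v w a b c i j k : w != v -> a != c -> b != c ->
  adj_at v a i -> adj_at v b j -> adj_at v c k ->
  adj w a -> adj w b -> adj w c -> i = j.
Proof.
move=> wv ac bc ai bj ck wa wb wc; apply/eqP; apply: contraT => ij.
have ji : j != i by rewrite eq_sym.
have wbj := common_nbr_corner ij ai bj wv wa wb.
have wai := common_nbr_corner ji bj ai wv wb wa.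
have [[vai va] [vbj vb]] := (ai, bj).
case: (eqVneq k i) => [ki | ki].
  rewrite ki in ck; have wa' := common_nbr_agree_off ac (adj_at_agree_off ai ck) wa wc.
  by case/eqP: vbj; rewrite -wbj wa' // va.
case: (eqVneq k j) => [kj | kj].
  rewrite kj in ck; have wb' := common_nbr_agree_off bc (adj_at_agree_off bj ck) wb wc.
  by case/eqP: vai; rewrite -wai wb' // vb.
have ik : i != k by rewrite eq_sym.
have wck := common_nbr_corner ik ai ck wv wa wc.
have waj : w j != a j by rewrite wbj -va // eq_sym.
have [_ wa'] := adj_at_of_neq wa waj.
by case/eqP: ck.1; rewrite -wck wa' // va.
Qed.

Lemma line_nbr_nonadj_eq v a b c w j :
  adj_at v a j -> adj_at v b j -> adj_at v c j -> a != b ->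
  adj w a -> adj w b -> ~~ adj w c -> w = c.
Proof.
move=> aj bj cj ab wa wb wc.
have wc' := agree_off_trans (common_nbr_agree_off ab (adj_at_agree_off aj bj) wa wb)
                            (adj_at_agree_off aj cj).
apply: (agree_off_eq wc'); apply/eqP; apply: contraNT wc => wcj.
by apply/adjP; exists j.
Qed.

Lemma line_common_nbr_q_gt3 v a b w i :
  adj_at v a i -> adj_at v b i -> a != b -> w != v -> adj w a -> adj w b -> 3 < q.
Proof.
move=> ai bi ab wv wa wb.
have wa' := common_nbr_agree_off ab (adj_at_agree_off ai bi) wa wb.
apply: (line_size (s := [:: v; a; b; w]) (c := v) (i := i)).
  rewrite /= !inE !negb_or (adj_at_neq ai) (adj_at_neq bi) ab !(eq_sym _ w).
  by rewrite wv (adj_neq wa) (adj_neq wb).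
move=> x; rewrite !inE => /or4P[] /eqP->; first by [].
- exact: agree_off_sym ai.2.
- exact: agree_off_sym bi.2.
- exact: agree_off_trans wa' (agree_off_sym ai.2).
Qed.

Lemma two_nbrs_on_line_q_gt2 v a w i : adj_at v a i -> adj_at w a i -> w != v -> 2 < q.
Proof.
move=> ai wi wv; apply: (line_size (s := [:: v; a; w]) (c := a) (i := i)).
  by rewrite /= !inE !negb_or (adj_at_neq ai) !(eq_sym _ w) wv (adj_at_neq wi).
by move=> x; rewrite !inE => /or3P[] /eqP-> //; [case: ai | case: wi].
Qed.

Lemma corner_nonadj_q_gt2 v a b w i j : i != j ->
  adj_at v a i -> adj_at v b j -> adj_at w a j -> ~~ adj w b -> 2 < q.
Proof.
move=> ij [vai va] [vbj vb] [waj wa] wb.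
apply: (size_uniq_ord (s := [:: v j; b j; w j])).
have wbj : w j != b j.
  apply: contraNneq wb => wbj; apply/adjP; exists i; split.
    by rewrite wa // -vb // eq_sym.
  move=> k ki; case: (eqVneq k j) => [-> // | kj].
  by rewrite wa // -va // vb.
have ji : j != i by rewrite eq_sym.
by rewrite /= !inE !negb_or vbj !(eq_sym _ (w j)) wbj (va j ji) waj.
Qed.

Lemma three_dirs_q_gt2_or_d_gt3 v a b c w i j k : i != j -> i != k -> j != k ->
  adj_at v a i -> adj_at v b j -> adj_at v c k ->
  adj w a -> ~~ adj w b -> ~~ adj w c -> 2 < q \/ 3 < d.
Proof.
move=> ij ik jk ai bj ck wa wb wc.
have wv : w != v by apply: contraNneq wb => ->; apply/adjP; exists j.
have /adjP[l al] := wa.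
have [li | li] := eqVneq l i.
  by rewrite li in al; left; apply: two_nbrs_on_line_q_gt2 ai al wv.
have [lj | lj] := eqVneq l j.
  by rewrite lj in al; left; apply: corner_nonadj_q_gt2 ij ai bj al wb.
have [lk | lk] := eqVneq l k.
  by rewrite lk in al; left; apply: corner_nonadj_q_gt2 ik ai ck al wc.
right; apply: (size_uniq_ord (s := [:: i; j; k; l])).
by rewrite /= !inE !negb_or ij ik jk !(eq_sym _ l) li lj lk.
Qed.

Lemma shattered_card_le3 (A : {set V}) : shattered adj A -> #|A| <= 3.
Proof.
move=> shA; rewrite leqNgt; apply/negP.
case/uniq_seq_of_card => -[|a [|b [|c [|e [|? ?]]]]] [abce size4 sA] // {size4}.
have W := shattered_patterns shA abce sA.
move: abce; rewrite /= !inE !negb_or => /and4P[/and3P[ab ac ae] /andP[bc be] ce _].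
have [v /= [va vb vc ve]] := W [:: true; true; true; true] erefl.
have /adjP[i ai] := va; have /adjP[j bj] := vb.
have /adjP[k ck] := vc; have /adjP[l el] := ve.
have [w1 /= [w1a w1b w1c w1e]] := W [:: true; true; true; false] erefl.
have w1v : w1 != v by apply: contraFneq w1e => ->.
have [w2 /= [w2a w2b w2c w2e]] := W [:: true; true; false; true] erefl.
have w2v : w2 != v by apply: contraFneq w2c => ->.
have cb : c != b by rewrite eq_sym.
have eb : e != b by rewrite eq_sym.
have ij := common_nbrs_same_dir w1v ac bc ai bj ck w1a w1b w1c.
have ik := common_nbrs_same_dir w1v ab cb ai ck bj w1a w1c w1b.
have il := common_nbrs_same_dir w2v ab eb ai el bj w2a w2e w2b.
rewrite -ij in bj; rewrite -ik in ck; rewrite -il in el.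
have [w /= [wa wb /negbT wc /negbT we]] := W [:: true; true; false; false] erefl.
case/eqP: ce; rewrite -(line_nbr_nonadj_eq ai bj ck ab wa wb wc).
exact: line_nbr_nonadj_eq ai bj el ab wa wb we.
Qed.

Lemma dims_of_shattered3 (A : {set V}) : shattered adj A -> 3 <= #|A| ->
  [\/ 3 <= d /\ 3 <= q, 2 <= d /\ 4 <= q | 4 <= d /\ 2 <= q].
Proof.
move=> shA /uniq_seq_of_card[[|a [|b [|c [|? ?]]]] [abc size3 sA]] // {size3}.
have W := shattered_patterns shA abc sA.
move: abc; rewrite /= !inE !negb_or andbT => /andP[/andP[ab ac] bc].
have [v /= [va vb vc]] := W [:: true; true; true] erefl.
have /adjP[i ai] := va; have /adjP[j bj] := vb; have /adjP[k ck] := vc.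
have d2 : 1 < d.
  have [w /= [/negbT wa /negbT wb _]] := W [:: false; false; false] erefl.
  exact: common_nonnbr_dim_gt1 ab wa wb.
have [ij | ij] := eqVneq i j.
  have [w /= [wa wb wc]] := W [:: true; true; false] erefl.
  have wv : w != v by apply: contraFneq wc => ->.
  rewrite -ij in bj; apply: Or32; split=> //.
  exact: line_common_nbr_q_gt3 ai bj ab wv wa wb.
have [ik | ik] := eqVneq i k.
  have [w /= [wa wb wc]] := W [:: true; false; true] erefl.
  have wv : w != v by apply: contraFneq wb => ->.
  rewrite -ik in ck; apply: Or32; split=> //.
  exact: line_common_nbr_q_gt3 ai ck ac wv wa wc.
have [jk | jk] := eqVneq j k.
  have [w /= [wa wb wc]] := W [:: false; true; true] erefl.
  have wv : w != v by apply: contraFneq wa => ->.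
  rewrite -jk in ck; apply: Or32; split=> //.
  exact: line_common_nbr_q_gt3 bj ck bc wv wb wc.
have d3 : 2 < d.
  by apply: (size_uniq_ord (s := [:: i; j; k])); rewrite /= !inE !negb_or ij ik jk.
have q2 : 1 < q.
  by apply: (size_uniq_ord (s := [:: v i; a i])); rewrite /= inE andbT; case: ai.
have [w /= [wa /negbT wb /negbT wc]] := W [:: true; false; false] erefl.
by case: (three_dirs_q_gt2_or_d_gt3 ij ik jk ai bj ck wa wb wc) => ?; [apply: Or31 | apply: Or33].
Qed.

End Hamming.

Section Coordinates.
Variables d n : nat.

Definition vtx (s : seq nat) : hamming_vertex d n.+1 := [ffun i : 'I_d => inord (nth 0 s i)].

(* Bounding the length of coordinate lists by [m] and their entries by [k] makes
   adjacency of concrete [vtx]s decidable by computation. *)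
Variables m k : nat.
Hypotheses (m_le_d : m <= d) (k_le_n : k <= n).

Lemma card_diff_vtx s t :
  size s <= m -> size t <= m -> all (leq^~ k) s -> all (leq^~ k) t ->
  #|[set i | vtx s i != vtx t i]| = count (fun i => nth 0 s i != nth 0 t i) (iota 0 m).
Proof.
move=> sm tm sk tk.
have nth_lt u i : all (leq^~ k) u -> nth 0 u i < n.+1.
  move=> uk; rewrite ltnS (leq_trans _ k_le_n) //.
  by case: (ltnP i (size u)) => [/(mem_nth 0)/(allP uk) | /(nth_default 0) ->].
have -> : [set i | vtx s i != vtx t i] = [set i : 'I_d | nth 0 s i != nth 0 t i].
  by apply/setP => i; rewrite !inE !ffunE -val_eqE /= !inordK ?nth_lt.
rewrite (card_ord_count d (fun i => nth 0 s i != nth 0 t i)) -(subnKC m_le_d) iotaD count_cat.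
rewrite (@eq_in_count _ _ pred0 (iota m _)) ?count_pred0 ?addn0 // => i.
by rewrite mem_iota => /andP[mi _]; rewrite !nth_default ?(leq_trans _ mi).
Qed.

Lemma adj_vtx s t :
  size s <= m -> size t <= m -> all (leq^~ k) s -> all (leq^~ k) t ->
  hamming_adj (vtx s) (vtx t) = (count (fun i => nth 0 s i != nth 0 t i) (iota 0 m) == 1).
Proof. by move=> *; rewrite /hamming_adj card_diff_vtx. Qed.

Lemma vtx_neq s t :
  size s <= m -> size t <= m -> all (leq^~ k) s -> all (leq^~ k) t ->
  (vtx s != vtx t) = (count (fun i => nth 0 s i != nth 0 t i) (iota 0 m) != 0).
Proof. by move=> *; rewrite -card_diff_eq0 card_diff_vtx. Qed.

End Coordinates.

Lemma shattered3_collinear d n : 2 <= d -> 3 <= n ->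
  exists2 A : {set hamming_vertex d n.+1}, shattered (@hamming_adj d n.+1) A & #|A| = 3.
Proof.
move=> d2 n3; have adjE := adj_vtx d2 n3.
apply: (shattered_of_patterns
  (s := [:: vtx d n [:: 1; 0]; vtx d n [:: 2; 0]; vtx d n [:: 3; 0]])).
  by rewrite /= !inE !negb_or !(vtx_neq d2 n3).
(* One witness per adjacency pattern, from [:: true; true; true] to [:: false; false; false]
   in lexicographic order. *)
move=> [|[] [|[] [|[] [|? ?]]]] size3 // {size3}.
- by exists (vtx d n [:: 0; 0]); rewrite /= !adjE.
- by exists (vtx d n [:: 3; 0]); rewrite /= !adjE.
- by exists (vtx d n [:: 2; 0]); rewrite /= !adjE.
- by exists (vtx d n [:: 1; 1]); rewrite /= !adjE.
- by exists (vtx d n [:: 1; 0]); rewrite /= !adjE.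
- by exists (vtx d n [:: 2; 1]); rewrite /= !adjE.
- by exists (vtx d n [:: 3; 1]); rewrite /= !adjE.
- by exists (vtx d n [:: 0; 1]); rewrite /= !adjE.
Qed.

Lemma shattered3_axes d n : 3 <= d -> 2 <= n ->
  exists2 A : {set hamming_vertex d n.+1}, shattered (@hamming_adj d n.+1) A & #|A| = 3.
Proof.
move=> d3 n2; have adjE := adj_vtx d3 n2.
apply: (shattered_of_patterns
  (s := [:: vtx d n [:: 1; 0; 0]; vtx d n [:: 0; 1; 0]; vtx d n [:: 0; 0; 1]])).
  by rewrite /= !inE !negb_or !(vtx_neq d3 n2).
move=> [|[] [|[] [|[] [|? ?]]]] size3 // {size3}.
- by exists (vtx d n [:: 0; 0; 0]); rewrite /= !adjE.
- by exists (vtx d n [:: 1; 1; 0]); rewrite /= !adjE.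
- by exists (vtx d n [:: 1; 0; 1]); rewrite /= !adjE.
- by exists (vtx d n [:: 2; 0; 0]); rewrite /= !adjE.
- by exists (vtx d n [:: 0; 1; 1]); rewrite /= !adjE.
- by exists (vtx d n [:: 0; 2; 0]); rewrite /= !adjE.
- by exists (vtx d n [:: 0; 0; 2]); rewrite /= !adjE.
- by exists (vtx d n [:: 1; 1; 1]); rewrite /= !adjE.
Qed.

Lemma shattered3_binary d n : 4 <= d -> 1 <= n ->
  exists2 A : {set hamming_vertex d n.+1}, shattered (@hamming_adj d n.+1) A & #|A| = 3.
Proof.
move=> d4 n1; have adjE := adj_vtx d4 n1.
apply: (shattered_of_patterns
  (s := [:: vtx d n [:: 1; 0; 0; 1]; vtx d n [:: 0; 1; 0; 1]; vtx d n [:: 0; 0; 1; 1]])).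
  by rewrite /= !inE !negb_or !(vtx_neq d4 n1).
move=> [|[] [|[] [|[] [|? ?]]]] size3 // {size3}.
- by exists (vtx d n [:: 0; 0; 0; 1]); rewrite /= !adjE.
- by exists (vtx d n [:: 1; 1; 0; 1]); rewrite /= !adjE.
- by exists (vtx d n [:: 1; 0; 1; 1]); rewrite /= !adjE.
- by exists (vtx d n [:: 1; 0; 0; 0]); rewrite /= !adjE.
- by exists (vtx d n [:: 0; 1; 1; 1]); rewrite /= !adjE.
- by exists (vtx d n [:: 0; 1; 0; 0]); rewrite /= !adjE.
- by exists (vtx d n [:: 0; 0; 1; 0]); rewrite /= !adjE.
- by exists (vtx d n [:: 1; 1; 1; 1]); rewrite /= !adjE.
Qed.

Lemma shattered3_of_dims d q :
  [\/ 3 <= d /\ 3 <= q, 2 <= d /\ 4 <= q | 4 <= d /\ 2 <= q] ->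
  exists2 A : {set hamming_vertex d q}, shattered (@hamming_adj d q) A & #|A| = 3.
Proof.
case: q => [|n] [[d3 q3] | [d2 q4] | [d4 q2]] //.
- exact: shattered3_axes d3 q3.
- exact: shattered3_collinear d2 q4.
- exact: shattered3_binary d4 q2.
Qed.

Theorem mainTheorem17 (d q : nat) :
  hamming_vc_dim d q = 3 <->
  [\/ (3 <= d /\ 3 <= q), (2 <= d /\ 4 <= q) | (4 <= d /\ 2 <= q)].
Proof.
rewrite /hamming_vc_dim; split=> [vc3 | dims].
  have vc_pos : 0 < vc_dim (@hamming_adj d q) by rewrite vc3.
  have [A shA cardA] := vc_dim_witness vc_pos.
  by apply: (dims_of_shattered3 shA); rewrite cardA vc3.
have [A shA cardA] := shattered3_of_dims dims.
have le3 : vc_dim (@hamming_adj d q) <= 3 := vc_dim_le (@shattered_card_le3 d q).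
by apply/eqP; rewrite eqn_leq le3 -cardA vc_dim_ge.
Qed.
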